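(* Let $n\in\mathbb{N}$ and let $a=(\alpha_1,\dots,\alpha_n)$, $b=(\beta_1,\dots,\beta_n)\in\mathbb{R}^n$ satisfy $\sum_{k=1}^n\alpha_k=\sum_{k=1}^n\beta_k$. Let $\mathcal{V}_a=\mathrm{conv}\{(\alpha_{\pi(1)},\dots,\alpha_{\pi(n)}):\pi\in S_n\}$ and $\mathcal{V}_b=\mathrm{conv}\{(\beta_{\pi(1)},\dots,\beta_{\pi(n)}):\pi\in S_n\}$. Then $\mathcal{V}_a$ and $\mathcal{V}_b$ cannot be properly separated by a hyperplane $H_{u,\alpha}=\{z\in\mathbb{R}^n:\langle z,u\rangle=\alpha\}$ with $u\in\mathbb{R}^n\setminus\{0\}$ and $\alpha\in\mathbb{R}$.
   Context: $S_n$ is the symmetric group on $\{1,\dots,n\}$ and $\langle\cdot,\cdot\rangle$ the standard inner product. Two convex sets $A,B$ are properly separated by a hyperplane $H$ if $A$ and $B$ lie in opposite closed half-spaces bounded by $H$ and are not both contained in $H$. *)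

From HB Require Import structures.
From mathcomp Require Import all_boot all_order all_algebra all_fingroup.
From mathcomp Require Import reals.
Set Implicit Arguments. Unset Strict Implicit. Unset Printing Implicit Defensive.
Import Order.TTheory GRing.Theory Num.Theory.
Local Open Scope ring_scope.

Definition permv (R : realType) (n : nat) (a : 'rV[R]_n) (s : 'S_n) : 'rV[R]_n :=
  \row_i a 0 (s i).

Definition conv_hull (R : realType) (n : nat) (I : finType) (v : I -> 'rV[R]_n)
  : 'rV[R]_n -> Prop :=
  fun z => exists w : I -> R,
    (forall i, 0 <= w i) /\ \sum_i w i = 1 /\ z = \sum_i w i *: v i.

Definition permutohedron (R : realType) (n : nat) (a : 'rV[R]_n) : 'rV[R]_n -> Prop :=
  conv_hull (fun s : 'S_n => permv a s).

Definition dotv (R : realType) (n : nat) (z u : 'rV[R]_n) : R :=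
  \sum_i z 0 i * u 0 i.

Definition properly_separated (R : realType) (n : nat)
  (A B : 'rV[R]_n -> Prop) (u : 'rV[R]_n) (al : R) : Prop :=
  (((forall z, A z -> dotv z u <= al) /\ (forall z, B z -> al <= dotv z u)) \/
   ((forall z, A z -> al <= dotv z u) /\ (forall z, B z -> dotv z u <= al))) /\
  ~ ((forall z, A z -> dotv z u = al) /\ (forall z, B z -> dotv z u = al)).

From HB Require Import structures.
From mathcomp Require Import all_boot all_order all_algebra all_fingroup.
From mathcomp Require Import reals.
Set Implicit Arguments. Unset Strict Implicit. Unset Printing Implicit Defensive.
Import Order.TTheory GRing.Theory Num.Theory.
Local Open Scope ring_scope.

(* Summed over all permutations [s], the vertices [permv a s] of the
   permutohedron give [#|S_n|/n * (sum of a)] in every coordinate, so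
   [hsum] makes [\sum_s <permv a s, u> = \sum_s <permv b s, u>].  If all
   vertices of [V_a] lie on one side of [H_{u,al}] and all vertices of [V_b]
   on the other, these two equal sums can only agree when every vertex lies on
   [H_{u,al}]; then both hulls lie in [H_{u,al}], so the separation is not
   proper. *)

Lemma sum_perm_app_indep (V : nmodType) (T : finType) (F : T -> V) (i j : T) :
  \sum_(s : {perm T}) F (s i) = \sum_(s : {perm T}) F (s j).
Proof.
rewrite (reindex_inj (mulgI (tperm i j))) /=.
by apply: eq_bigr => s _; rewrite permM tpermL.
Qed.

Lemma sum_perm_app_mulrn (V : nmodType) (T : finType) (F : T -> V) (i : T) :
  (\sum_(s : {perm T}) F (s i)) *+ #|T| = (\sum_x F x) *+ #|{perm T}|.
Proof.
rewrite -sumr_const (eq_bigr _ (fun j _ => sum_perm_app_indep F i j)).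
rewrite exchange_big -sumr_const; apply: eq_bigr => s _.
by rewrite [RHS](reindex_inj (@perm_inj _ s)).
Qed.

Lemma eq_sum_perm_app (R : numDomainType) (T : finType) (F G : T -> R) (i : T) :
  \sum_x F x = \sum_x G x ->
  \sum_(s : {perm T}) F (s i) = \sum_(s : {perm T}) G (s i).
Proof.
move=> eqFG; have T_gt0 : #|T| != 0%N by rewrite -lt0n; apply/card_gt0P; exists i.
have := eqrMn2r #|T| (\sum_(s : {perm T}) F (s i)) (\sum_(s : {perm T}) G (s i)).
by rewrite !sum_perm_app_mulrn eqFG eqxx (negbTE T_gt0) => /esym/eqP.
Qed.

Lemma sum_dotv_permv (R : realType) (n : nat) (a u : 'rV[R]_n) :
  \sum_(s : 'S_n) dotv (permv a s) u = \sum_i u 0 i * \sum_(s : 'S_n) a 0 (s i).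
Proof.
rewrite /dotv exchange_big /=; apply: eq_bigr => i _.
by rewrite mulr_sumr; apply: eq_bigr => s _; rewrite mxE mulrC.
Qed.

Lemma dotv_sum_scale (R : realType) (n : nat) (I : finType) (w : I -> R)
    (v : I -> 'rV[R]_n) (u : 'rV[R]_n) :
  dotv (\sum_i w i *: v i) u = \sum_i w i * dotv (v i) u.
Proof.
rewrite /dotv; under eq_bigr do rewrite summxE mulr_suml.
rewrite exchange_big /=; apply: eq_bigr => i _; rewrite mulr_sumr.
by apply: eq_bigr => k _; rewrite mxE mulrA.
Qed.

Lemma conv_hull_point (R : realType) (n : nat) (I : finType)
    (v : I -> 'rV[R]_n) (i : I) :
  conv_hull v (v i).
Proof.
exists (fun j => (j == i)%:R); split; first by move=> j; exact: ler0n.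
split; first by rewrite (bigD1 i) //= eqxx big1 ?addr0 // => j /negbTE ->.
rewrite (bigD1 i) //= eqxx scale1r big1 ?addr0 // => j /negbTE ->.
by rewrite scale0r.
Qed.

Lemma conv_hull_dotv_const (R : realType) (n : nat) (I : finType)
    (v : I -> 'rV[R]_n) (u z : 'rV[R]_n) (al : R) :
  (forall i, dotv (v i) u = al) -> conv_hull v z -> dotv z u = al.
Proof.
move=> vH [w [_ [w1 ->]]].
by rewrite dotv_sum_scale (eq_bigr _ (fun i _ => congr1 _ (vH i))) -mulr_suml w1 mul1r.
Qed.

Lemma squeeze_sum (R : numDomainType) (I : finType) (x y : I -> R) (al : R) :
  (forall i, x i <= al) -> (forall i, al <= y i) -> \sum_i x i = \sum_i y i ->
  (forall i, x i = al) /\ (forall i, y i = al).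
Proof.
move=> x_le y_ge eq_xy.
have gap0 : \sum_i (al - x i) + \sum_i (y i - al) = 0.
  by rewrite !sumrB eq_xy addrC addrA subrK subrr.
move/eqP: gap0; rewrite paddr_eq0 ?sumr_ge0 // => [|i _|i _]; rewrite ?subr_ge0 //.
case/andP=> /eqP/psumr_eq0P gapx /eqP/psumr_eq0P gapy; split=> i.
- by apply/eqP; rewrite eq_sym -subr_eq0 gapx // => j _; rewrite subr_ge0.
- by apply/eqP; rewrite -subr_eq0 gapy // => j _; rewrite subr_ge0.
Qed.

Theorem lemma2 (R : realType) (n : nat) (a b : 'rV[R]_n)
  (hsum : \sum_(k < n) a 0 k = \sum_(k < n) b 0 k) :
  ~ (exists (u : 'rV[R]_n) (al : R),
       u != 0 /\ properly_separated (permutohedron a) (permutohedron b) u al).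
Proof.
move=> [u [al [_ [sep not_in_H]]]]; apply: not_in_H.
have vertex_sums :
    \sum_(s : 'S_n) dotv (permv a s) u = \sum_(s : 'S_n) dotv (permv b s) u.
  by rewrite !sum_dotv_permv; apply: eq_bigr => i _; rewrite (eq_sum_perm_app i hsum).
have vertex (c : 'rV[R]_n) (s : 'S_n) : permutohedron c (permv c s).
  exact: conv_hull_point.
case: sep => [[sepA sepB] | [sepA sepB]].
- have [aH bH] := squeeze_sum (fun s => sepA _ (vertex a s))
    (fun s => sepB _ (vertex b s)) vertex_sums.
  by split=> z; apply: conv_hull_dotv_const.
- have [bH aH] := squeeze_sum (fun s => sepB _ (vertex b s))
    (fun s => sepA _ (vertex a s)) (esym vertex_sums).
  by split=> z; apply: conv_hull_dotv_const.
Qed.
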